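(* Suppose the LP decoder, on received word $y\in\Sigma^n$, outputs a codeword $c\in\mathcal C$ (i.e. the minimizer $(f,w)$ it computes has $f=\Xi(c)\in\{0,1\}^{(q-1)n}$). Then $c$ is a maximum-likelihood codeword: $p(y\mid c)\ge p(y\mid c')$ for all $c'\in\mathcal C$, where $p(y\mid c)=\prod_{i=1}^n p(y_i\mid c_i)$.
   Context: Let $R$ be a finite ring with $q$ elements and additive identity $0$; $R^-=R\setminus\{0\}$. Let $\mathcal H$ be an $m\times n$ matrix over $R$, $\mathcal C=\{c\in R^n:c\mathcal H^T=0\}$, $\mathcal I=\{1,\dots,n\}$, $\mathcal J=\{1,\dots,m\}$, $\mathcal I_j=\{i:\mathcal H_{j,i}\ne0\}$, $\mathcal C_j=\{b\in R^{\mathcal I_j}:\sum_{i\in\mathcal I_j}b_i\mathcal H_{j,i}=0\}$. Let $\xi:R\to\{0,1\}^{q-1}$ (coordinates indexed by $R^-$), $\xi(a)^{(\gamma)}=1$ iff $\gamma=a$; $\Xi(c)=(\xi(c_1)\mid\cdots\mid\xi(c_n))$, with coordinates $f_i^{(\alpha)}$ for $f\in\mathbb R^{(q-1)n}$. The polytope $\mathcal Q$ is the set of $(f,w)$, $w=(w_{j,b})_{j\in\mathcal J,b\in\mathcal C_j}$, with $w_{j,b}\ge0$, $\sum_{b\in\mathcal C_j}w_{j,b}=1$ for each $j$, and $f_i^{(\alpha)}=\sum_{b\in\mathcal C_j,b_i=\alpha}w_{j,b}$ for all $j$, $i\in\mathcal I_j$, $\alpha\in R^-$. Channel: memoryless with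 input alphabet $R$, output alphabet $\Sigma$ (finite, or $\mathbb R^l$ or $\mathbb C^l$), transition probability (density) $p(y\mid a)$. For $y\in\Sigma$ and $\alpha\in R^-$, $\lambda^{(\alpha)}(y)=\log\big(p(y\mid0)/p(y\mid\alpha)\big)$, and for $y\in\Sigma^n$, $\Lambda(y)$ is the vector with coordinates $\lambda^{(\alpha)}(y_i)$. The LP decoder computes a minimizer $(f,w)$ of $\Lambda(y)f^T=\sum_{i,\alpha}\lambda^{(\alpha)}(y_i)f_i^{(\alpha)}$ over $\mathcal Q$; if $f\in\{0,1\}^{(q-1)n}$ it outputs $\Xi^{-1}(f)$, otherwise it declares a decoding failure. *)

From HB Require Import structures.
From mathcomp Require Import all_boot all_order all_algebra.
From mathcomp Require Import reals exp.
Set Implicit Arguments. Unset Strict Implicit. Unset Printing Implicit Defensive.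
Import Order.TTheory GRing.Theory Num.Theory.
Local Open Scope ring_scope.

Section LPDecoding.
Variables (Rg : finPzRingType) (m n : nat) (H : 'M[Rg]_(m, n)).

Definition codeword (c : 'rV[Rg]_n) : Prop := c *m H^T = 0.

(* Local code C_j.  A vector b in R^{I_j} is encoded as a function
   'I_n -> Rg vanishing outside I_j = { i | H j i != 0 } (a bijection). *)
Definition local_codeword (j : 'I_m) (b : {ffun 'I_n -> Rg}) : bool :=
  [forall i, (H j i == 0) ==> (b i == 0)] && (\sum_(i < n) b i * H j i == 0).

Variable (R : realType).

(* The polytope Q : f is indexed by (i, alpha) with alpha in R^- (values of
   f at alpha = 0 are meaningless and unconstrained); w is indexed by
   j in J and b in C_j (values of w outside C_j are meaningless). *)
Definition in_Q (f : 'I_n -> Rg -> R) (w : 'I_m -> {ffun 'I_n -> Rg} -> R) : Prop :=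
  [/\ forall j b, local_codeword j b -> 0 <= w j b,
      forall j, \sum_(b | local_codeword j b) w j b = 1
    & forall j i alpha, H j i != 0 -> alpha != 0 ->
        f i alpha = \sum_(b | local_codeword j b && (b i == alpha)) w j b].

Definition Xi (c : 'rV[Rg]_n) (i : 'I_n) (alpha : Rg) : R :=
  if c 0 i == alpha then 1 else 0.

Variables (Sigma : Type) (p : Sigma -> Rg -> R).

Definition llr (u : Sigma) (alpha : Rg) : R := ln (p u 0 / p u alpha).

Definition lp_cost (y : 'I_n -> Sigma) (f : 'I_n -> Rg -> R) : R :=
  \sum_(i < n) \sum_(alpha | alpha != 0) llr (y i) alpha * f i alpha.

Definition LP_minimizer (y : 'I_n -> Sigma) f w : Prop :=
  in_Q f w /\ forall f' w', in_Q f' w' -> lp_cost y f <= lp_cost y f'.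

Definition likelihood (y : 'I_n -> Sigma) (c : 'rV[Rg]_n) : R :=
  \prod_(i < n) p (y i) (c 0 i).

End LPDecoding.

From HB Require Import structures.
From mathcomp Require Import all_boot all_order all_algebra.
From mathcomp Require Import reals exp.
Set Implicit Arguments. Unset Strict Implicit. Unset Printing Implicit Defensive.
Import Order.TTheory GRing.Theory Num.Theory.
Local Open Scope ring_scope.

(* Every codeword c' yields a point (Xi c', w') of Q, where w' puts all weight
   of check j on the restriction of c' to I_j.  On such points the LP cost is
   a constant minus ln p(y | c'), so minimality of the integral vertex Xi c
   among them is exactly maximality of the likelihood of c. *)

Lemma ln_prod (R : realType) (I : Type) (s : seq I) (g : I -> R) :
  (forall i, 0 < g i) -> ln (\prod_(i <- s) g i) = \sum_(i <- s) ln (g i).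
Proof.
move=> g_gt0; elim: s => [|a s IHs]; first by rewrite !big_nil ln1.
by rewrite !big_cons lnM ?IHs // posrE // prodr_gt0.
Qed.

Section CodewordVertex.
Variables (Rg : finPzRingType) (m n : nat) (H : 'M[Rg]_(m, n)) (R : realType).
Variable c : 'rV[Rg]_n.

Definition local_word (j : 'I_m) : {ffun 'I_n -> Rg} :=
  [ffun i => if H j i == 0 then 0 else c 0 i].

Definition vertex_weight (j : 'I_m) (b : {ffun 'I_n -> Rg}) : R :=
  (b == local_word j)%:R.

Hypothesis c_codeword : codeword H c.

Lemma local_word_local_codeword j : local_codeword H j (local_word j).
Proof.
apply/andP; split.
  by apply/forallP => i; apply/implyP => Hji0; rewrite ffunE Hji0.
move/matrixP/(_ 0 j): c_codeword; rewrite !mxE => cHj0.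
apply/eqP; rewrite -[RHS]cHj0; apply: eq_bigr => i _; rewrite ffunE !mxE.
by case: eqP => [->|]; rewrite ?mulr0.
Qed.

Lemma sum_vertex_weight j (P : pred {ffun 'I_n -> Rg}) :
  \sum_(b | P b) vertex_weight j b = (P (local_word j))%:R.
Proof.
rewrite big_mkcond (bigD1 (local_word j)) //= big1 => [|b /negbTE b_neq].
  by rewrite /vertex_weight eqxx addr0; case: (P _).
by rewrite /vertex_weight b_neq; case: (P _).
Qed.

Lemma Xi_in_Q : in_Q H (Xi R c) vertex_weight.
Proof.
apply: And3 => [j b _ | j | j i a Hji0 _]; first exact: (ler0n _ (_ == _)).
  by rewrite sum_vertex_weight local_word_local_codeword.
by rewrite sum_vertex_weight local_word_local_codeword ffunE (negbTE Hji0) /Xi; case: eqP.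
Qed.

End CodewordVertex.

Section CostOfCodewords.
Variables (Rg : finPzRingType) (n : nat) (R : realType) (Sigma : Type).
Variables (p : Sigma -> Rg -> R) (y : 'I_n -> Sigma).
Hypothesis p_gt0 : forall (i : 'I_n) (a : Rg), 0 < p (y i) a.

Lemma lp_cost_Xi (c : 'rV[Rg]_n) :
  lp_cost p y (Xi R c) = \sum_(i < n) ln (p (y i) 0) - ln (likelihood p y c).
Proof.
rewrite /likelihood ln_prod // -sumrB; apply: eq_bigr => i _.
have [c0 | c_neq0] := eqVneq (c 0 i) 0.
  by rewrite c0 subrr big1 // => a a_neq0; rewrite /Xi c0 eq_sym (negbTE a_neq0) mulr0.
rewrite (bigD1 (c 0 i)) //= big1 => [|a /andP[_ a_neq]].
  by rewrite /Xi eqxx mulr1 addr0 /llr ln_div ?posrE.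
by rewrite /Xi eq_sym (negbTE a_neq) mulr0.
Qed.

Lemma lp_cost_le_likelihood (c c' : 'rV[Rg]_n) :
  (lp_cost p y (Xi R c) <= lp_cost p y (Xi R c')) =
  (likelihood p y c' <= likelihood p y c).
Proof.
have likelihood_gt0 d : likelihood p y d \is Num.pos by rewrite posrE prodr_gt0.
by rewrite !lp_cost_Xi lerD2l lerN2 ler_ln.
Qed.

End CostOfCodewords.

Theorem proposition2 (Rg : finPzRingType) (m n : nat) (H : 'M[Rg]_(m, n))
    (R : realType) (Sigma : Type) (p : Sigma -> Rg -> R)
    (y : 'I_n -> Sigma)
    (hp : forall (i : 'I_n) (a : Rg), 0 < p (y i) a)
    (f : 'I_n -> Rg -> R) (w : 'I_m -> {ffun 'I_n -> Rg} -> R)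
    (c : 'rV[Rg]_n) :
  codeword H c ->
  LP_minimizer H p y f w ->
  (forall (i : 'I_n) (alpha : Rg), alpha != 0 -> f i alpha = Xi R c i alpha) ->
  forall c' : 'rV[Rg]_n, codeword H c' -> likelihood p y c' <= likelihood p y c.
Proof.
move=> _ [_ f_min] f_Xi c' c'_codeword.
have cost_f : lp_cost p y f = lp_cost p y (Xi R c).
  by apply: eq_bigr => i _; apply: eq_bigr => a a_neq0; rewrite f_Xi.
rewrite -lp_cost_le_likelihood // -cost_f.
exact: f_min (Xi_in_Q R c'_codeword).
Qed.
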